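(* Let $\delta$ be a deco polyomino of height $n$ which is a parallelogram polyomino, and let $\pi=\Phi_4^{-1}(\delta)\in S_n$. Then the number of cells in the first (leftmost) column of $\delta$ equals the length of the last ascending run of $\pi$.
   Context: Cells are unit squares $[i,i+1]\times[j,j+1]$ with integer $i,j$; a polyomino is a finite edge-connected set of cells, up to translation. A directed polyomino has a distinguished cell (the source) such that every cell can be reached from the source by a path of cells moving only North or East inside the polyomino. It is column-convex if each column is connected. The (directed) height is the number of distinct diagonal lines $x+y=\text{const}$ passing through centers of its cells. A deco polyomino is a directed column-convex polyomino whose height is attained only in its last (rightmost) column. Every deco polyomino of height $n$ is built uniquely by $n$ steps from the empty polyomino; at step $j$ one performs either an elevation (add a cell at the bottom of the leftmost column; step 1 is always an elevation) or a column pasting (add a new column of $k$ cells, $1\le k\le j-1$, to the left of the current polyomino so that the bottoms of the first two columns lie at the same level). The bijection $\Phi_4^{-1}$ from deco polyominoes of height $n$ to $S_n$ is defined recursively: the height-1 polyomino maps to the permutation $1$; if $\delta\in D_n$ arises from $\delta'\in D_{n-1}$ and $\Phi_4^{-1}(\delta')=\pi_1\cdots\pi_{n-1}$, then $\Phi_4^{-1}(\delta)=\pi_1\cdots\pi_{n-1}\,n$ if the last step is an elevation, and $\Phi_4^{-1}(\delta)=\pi_1\cdots\pi_{n-1-k}\,n\,\pi_{n-k}\cdots\pi_{n-1}$ if the last step pastes a column of length $k$ (so that exactly $k$ entries follow $n$). An ascending run of a permutation is a maximal increasing block of consecutive entries. A parallelogram polyomino is a polyomino bounded by two lattice paths with steps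 $(1,0)$ and $(0,1)$ which intersect only at their common origin and common endpoint. *)

From mathcomp Require Import all_boot all_order all_algebra.
Set Implicit Arguments. Unset Strict Implicit. Unset Printing Implicit Defensive.
Import Order.TTheory GRing.Theory Num.Theory.
Local Open Scope ring_scope.

(* Cells are identified by their lower-left corner (i, j) : int * int. *)
Definition cell := (int * int)%type.

(* A construction sequence s = [:: s_1; ...; s_n]: s_j = 0 means elevation,
   s_j = k >= 1 means pasting a new column of k cells (1 <= k <= j-1).
   Validity: s_j <= j - 1 for every j (so step 1 is an elevation). *)
Definition valid_steps (s : seq nat) : bool :=
  all (fun i => (nth 0%N s i <= i)%N) (iota 0 (size s)).

(* A polyomino under construction is stored as its list of columns, leftmost
   first; a column is (bottom level, number of cells). *)
Definition deco_step (cols : seq (int * nat)) (k : nat) : seq (int * nat) :=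
  if k == 0%N then
    match cols with
    | [::] => [:: (0, 1%N)]
    | (b, h) :: r => (b - 1, h.+1) :: r
    end
  else
    match cols with
    | [::] => [:: (0, k)]
    | (b, h) :: r => (b, k) :: (b, h) :: r
    end.

Definition deco_columns (s : seq nat) : seq (int * nat) := foldl deco_step [::] s.

Definition cells_of_columns (cols : seq (int * nat)) : seq cell :=
  flatten [seq [seq ((Posz ic.1), ic.2.1 + Posz t) | t <- iota 0 ic.2.2]
          | ic <- zip (iota 0 (size cols)) cols].

Definition deco_cells (s : seq nat) : seq cell := cells_of_columns (deco_columns s).

Definition first_column_size (P : seq cell) : nat :=
  count (fun c : cell => all (fun d : cell => c.1 <= d.1) P) P.

(* permutations written as words pi_1 ... pi_n (entries 1..n) *)
Fixpoint phi4inv_aux (acc : seq nat) (s : seq nat) : seq nat :=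
  match s with
  | [::] => acc
  | k :: s' =>
      let n := size acc in
      let acc' := if k == 0%N then rcons acc n.+1
                  else take (n - k) acc ++ n.+1 :: drop (n - k) acc in
      phi4inv_aux acc' s'
  end.

Definition phi4inv (s : seq nat) : seq nat := phi4inv_aux [::] s.

Definition last_run_length (w : seq nat) : nat :=
  (size w - find (fun i => sorted ltn (drop i w)) (iota 0 (size w)))%N.

Definition lstep (p : int * int) (b : bool) : int * int :=
  if b then (p.1, p.2 + 1) else (p.1 + 1, p.2).

Definition path_points (o : int * int) (p : seq bool) : seq (int * int) :=
  o :: scanl lstep o p.

Definition path_end (o : int * int) (p : seq bool) : int * int := foldl lstep o p.

Definition east_step_at (o : int * int) (p : seq bool) (q : int * int) : bool :=
  has (fun i => ~~ nth true p i && (nth o (path_points o p) i == q))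
      (iota 0 (size p)).

Definition in_region (o : int * int) (u l : seq bool) (c : cell) : Prop :=
  exists yu yl : int,
    [/\ east_step_at o u (c.1, yu), east_step_at o l (c.1, yl) & yl <= c.2 < yu].

Definition is_parallelogram (P : seq cell) : Prop :=
  exists (o : int * int) (u l : seq bool),
    [/\ path_end o u = path_end o l,
        (forall q, q \in path_points o u -> q \in path_points o l ->
                   q = o \/ q = path_end o u)
      & forall c : cell, c \in P <-> in_region o u l c].

From mathcomp Require Import all_boot all_order all_algebra.
From mathcomp Require Import zify.
Import Order.TTheory GRing.Theory Num.Theory.
Set Implicit Arguments. Unset Strict Implicit. Unset Printing Implicit Defensive.

(* Along the construction of the polyomino, the word Phi_4^{-1} keeps the
   invariant that its last ascending run is as long as the current first
   column: an elevation appends the new maximum n to the run and a cell to the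
   first column, while pasting a column of k cells inserts n just before the
   last k entries, leaving a last run of length k provided those k entries are
   ascending, i.e. provided k is at most the height h of the previous first
   column.  Column tops never move once created, and in a parallelogram
   polyomino they weakly increase from left to right (the upper boundary is a
   north/east path); at a pasting the new column and the old first column share
   their bottom, so this gives exactly k <= h. *)

Record is_last_run (w : seq nat) (h : nat) : Prop := IsLastRun {
  last_run_gt0 : 0 < h;
  last_run_le_size : h <= size w;
  last_run_sorted : sorted ltn (drop (size w - h) w);
  last_run_descent : h < size w -> nth 0 w (size w - h) < nth 0 w (size w - h).-1 }.

Lemma last_run_lengthE w h : is_last_run w h -> last_run_length w = h.
Proof.
case=> h_gt0 h_le w_sorted w_desc; rewrite /last_run_length.
set n := size w in h_le w_sorted w_desc *; set m := (n - h) in w_sorted w_desc *.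
rewrite -[n](subnKC (leq_subr h n)) -/m iotaD find_cat.
have -> : has (fun i => sorted ltn (drop i w)) (iota 0 m) = false.
  apply/hasP => -[j]; rewrite mem_iota add0n => /andP [_ j_lt] j_sorted.
  have /(drop_sorted (m.-1 - j)) : sorted ltn (drop j w) by [].
  rewrite drop_drop (_ : m.-1 - j + j = m.-1); last by lia.
  rewrite (drop_nth 0) ?(drop_nth 0 (n := m.-1.+1)); try lia.
  rewrite (_ : m.-1.+1 = m); last by lia.
  have /w_desc : h < n by lia.
  by move=> /= desc /andP [asc _]; lia.
rewrite (_ : n - m = (n - m).-1.+1); last by lia.
by rewrite /= w_sorted size_iota addn0; lia.
Qed.

Lemma is_last_run_rcons w h m :
  is_last_run w h -> all (fun x => x < m) w -> is_last_run (rcons w m) h.+1.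
Proof.
case=> h_gt0 h_le w_sorted w_desc w_lt; split; rewrite ?size_rcons ?subSS //.
  rewrite drop_rcons ?leq_subr //.
  case E: (drop (size w - h) w) w_sorted => [|a t] //= at_sorted.
  rewrite rcons_path at_sorted /=; apply: (allP w_lt).
  by apply: (@mem_drop (size w - h)); rewrite E mem_last.
move=> h_lt; rewrite !nth_rcons (_ : size w - h < size w) ?w_desc //; try lia.
by rewrite (_ : (size w - h).-1 < size w); lia.
Qed.

Lemma is_last_run_insert w h k m :
  is_last_run w h -> all (fun x => x < m) w -> 0 < k <= h ->
  is_last_run (take (size w - k) w ++ m :: drop (size w - k) w) k.
Proof.
case=> h_gt0 h_le w_sorted w_desc w_lt /andP [k_gt0 k_le].
have size_take_k : size (take (size w - k) w) = size w - k.
  by rewrite size_takel // leq_subr.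
have size_ins : size (take (size w - k) w ++ m :: drop (size w - k) w) = (size w).+1.
  by rewrite size_cat /= size_drop size_take_k; lia.
split; rewrite ?size_ins //; first lia.
  rewrite drop_cat size_take_k ifN; last by lia.
  rewrite (_ : (size w).+1 - k - (size w - k) = 1); last by lia.
  rewrite /= drop0 (_ : size w - k = (h - k) + (size w - h)); last by lia.
  by rewrite -drop_drop drop_sorted.
move=> _; rewrite !nth_cat size_take_k !ifN; try lia.
rewrite (_ : ((size w).+1 - k).-1 - (size w - k) = 0); last by lia.
rewrite (_ : (size w).+1 - k - (size w - k) = 1) //=; last by lia.
have pos_lt : size w - k < size w by lia.
by rewrite nth_drop addn0; apply: (allP w_lt); rewrite mem_nth.
Qed.

Definition phi4_step (w : seq nat) (k : nat) : seq nat :=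
  if k == 0 then rcons w (size w).+1
  else take (size w - k) w ++ (size w).+1 :: drop (size w - k) w.

Lemma phi4inv_rcons s k : phi4inv (rcons s k) = phi4_step (phi4inv s) k.
Proof.
by rewrite /phi4inv; elim: s [::] => [|k' s IHs] w /=; rewrite ?IHs.
Qed.

Lemma size_phi4_step w k : size (phi4_step w k) = (size w).+1.
Proof.
rewrite /phi4_step; case: eqP => _; first by rewrite size_rcons.
by rewrite size_cat /= size_take size_drop; case: ltnP; lia.
Qed.

Lemma size_phi4inv s : size (phi4inv s) = size s.
Proof.
elim/last_ind: s => [//|s k IHs].
by rewrite phi4inv_rcons size_phi4_step size_rcons IHs.
Qed.

Lemma phi4inv_bounded s : all (fun x => x <= size s) (phi4inv s).
Proof.
elim/last_ind: s => [//|s k IHs]; rewrite phi4inv_rcons size_rcons.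
have le_n x : x \in phi4inv s -> x <= (size s).+1.
  by move/(allP IHs) => x_le; exact: leqW.
apply/allP => x; rewrite /phi4_step size_phi4inv; case: eqP => _.
  by rewrite mem_rcons inE => /orP [/eqP -> // | /le_n].
by rewrite mem_cat inE orbCA -mem_cat cat_take_drop => /orP [/eqP -> // | /le_n].
Qed.

Section Columns.
Local Open Scope ring_scope.

Definition cells_from (k : nat) (cols : seq (int * nat)) : seq cell :=
  flatten [seq [seq (Posz ic.1, ic.2.1 + Posz t) | t <- iota 0 ic.2.2]
          | ic <- zip (iota k (size cols)) cols].

Lemma mem_column (k : nat) (b : int) (h : nat) (x y : int) :
  ((x, y) \in [seq (Posz k, b + Posz t) | t <- iota 0 h]) =
  (x == Posz k) && (b <= y < b + Posz h).
Proof.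
apply/mapP/andP => [[t]|[/eqP -> y_in]].
  by rewrite mem_iota => /andP [_ t_lt] [-> ->]; split => //; apply/andP; split; lia.
exists `|y - b|%N; first by rewrite mem_iota; apply/andP; split => //; lia.
by congr pair; lia.
Qed.

Lemma mem_cells_from (cols : seq (int * nat)) (k : nat) (x y : int) :
  (x, y) \in cells_from k cols <->
  exists2 i, (i < size cols)%N &
    x = Posz (k + i) /\
    (nth (0, 0%N) cols i).1 <= y < (nth (0, 0%N) cols i).1 + Posz (nth (0, 0%N) cols i).2.
Proof.
elim: cols k x => [|[b h] cols IHcols] k x; first by split => [//|[]].
rewrite /cells_from /= mem_cat -/(cells_from k.+1 cols) mem_column.
split => [|[[|i]] /= i_lt [-> y_in]].
- case/orP => [/andP [/eqP -> y_in] | /(IHcols k.+1) [i i_lt [-> y_in]]].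
    by exists 0%N; rewrite ?addn0.
  by exists i.+1 => //; split => //; lia.
- by rewrite addn0 eqxx y_in.
- by apply/orP; right; apply/(IHcols k.+1); exists i => //; split => //; lia.
Qed.

Lemma foldl_lstep_ge (p : seq bool) (q : int * int) :
  q.1 <= (foldl lstep q p).1 /\ q.2 <= (foldl lstep q p).2.
Proof.
elim: p q => [|b p IHp] q /=; first by [].
by have [] := IHp (lstep q b); case: b => /=; split; lia.
Qed.

Lemma nth_path_points (o : int * int) (p : seq bool) (i : nat) : (i <= size p)%N ->
  nth o (path_points o p) i = foldl lstep o (take i p).
Proof. by case: i => [|i] i_le /=; rewrite ?take0 ?nth_scanl. Qed.

Lemma path_points_mono (o : int * int) (p : seq bool) (i j : nat) :
  (i <= j <= size p)%N ->
  (nth o (path_points o p) i).1 <= (nth o (path_points o p) j).1 /\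
  (nth o (path_points o p) i).2 <= (nth o (path_points o p) j).2.
Proof.
move=> /andP [i_le j_le]; rewrite !nth_path_points ?(leq_trans i_le) //.
rewrite -(subnKC i_le) takeD foldl_cat; exact: foldl_lstep_ge.
Qed.

Lemma east_step_atP (o : int * int) (p : seq bool) (q : int * int) :
  east_step_at o p q -> exists2 a, (a < size p)%N & nth o (path_points o p) a = q.
Proof.
by case/hasP => a; rewrite mem_iota add0n => /andP [_ a_lt] /andP [_ /eqP]; exists a.
Qed.

(* The upper path reaches column i+1 no lower than column i, so the part of
   column i+1 below the top of column i is filled. *)
Lemma in_region_fill_right (o : int * int) (u l : seq bool) (i : nat) (yt yb y : int) :
  in_region o u l (Posz i, yt) -> in_region o u l (Posz i.+1, yb) -> yb <= y <= yt ->
  in_region o u l (Posz i.+1, y).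
Proof.
move=> [yu [yl [east_u _ yt_in]]] [yu' [yl' [east_u' east_l' yb_in]]] y_in.
exists yu', yl'; split => //=.
have [a a_lt pt_a] := east_step_atP east_u.
have [a' a'_lt pt_a'] := east_step_atP east_u'.
have a_le : (a <= a')%N.
  rewrite leqNgt; apply/negP => a'_lt_a.
  have [] := @path_points_mono o u a' a ltac:(by rewrite (ltnW a'_lt_a) ltnW).
  by rewrite pt_a pt_a' /=; lia.
have [_] := @path_points_mono o u a a' ltac:(by rewrite a_le ltnW).
by rewrite pt_a pt_a' /=; move: yt_in yb_in y_in => /=; lia.
Qed.

Definition column_tops (cols : seq (int * nat)) : seq int :=
  [seq c.1 + Posz c.2 | c <- cols].

Lemma parallelogram_column_tops_sorted (cols : seq (int * nat)) :
  all (fun c => 0 < c.2)%N cols -> is_parallelogram (cells_of_columns cols) ->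
  sorted <=%R (column_tops cols).
Proof.
move=> cols_gt0 [o [u [l [_ _ P_region]]]].
have mem_cols x y := mem_cells_from cols 0 x y.
apply/(sortedP 0) => i; rewrite size_map => i_lt.
have i_lt' := ltnW i_lt.
rewrite /column_tops !(nth_map (0%:Z, 0%N)) //.
have col_gt0 j : (j < size cols)%N -> (0 < (nth (0%:Z, 0%N) cols j).2)%N.
  by move=> j_lt; apply: (allP cols_gt0); rewrite mem_nth.
move: (col_gt0 i i_lt') (col_gt0 i.+1 i_lt).
case E: (nth _ cols i) => [b h]; case E': (nth _ cols i.+1) => [b' h'] /= h_gt0 h'_gt0.
rewrite leNgt; apply/negP => /= tops_lt.
have top_i : (Posz i, b + Posz h - 1) \in cells_of_columns cols.
  by apply/mem_cols; exists i; rewrite // E; split => /=; lia.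
have bot_i' : (Posz i.+1, b') \in cells_of_columns cols.
  by apply/mem_cols; exists i.+1; rewrite // E'; split => /=; lia.
have : (Posz i.+1, b + Posz h - 1) \in cells_of_columns cols.
  apply/P_region/(in_region_fill_right (yt := b + Posz h - 1) (yb := b')).
  - exact/P_region.
  - exact/P_region.
  - by apply/andP; split; lia.
by case/mem_cols => j _ [/eqP]; rewrite add0n eqz_nat => /eqP <-; rewrite E' /=; lia.
Qed.

Lemma deco_step_cons (cols : seq (int * nat)) (k : nat) :
  exists b h r, deco_step cols k = (b, h) :: r.
Proof. by rewrite /deco_step; case: eqP; case: cols => [|[b h] r]; do 3 eexists. Qed.

Lemma deco_columns_rcons (s : seq nat) (k : nat) :
  deco_columns (rcons s k) = deco_step (deco_columns s) k.
Proof. exact: foldl_rcons. Qed.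

Lemma deco_columns_cons (s : seq nat) :
  (0 < size s)%N -> exists b h r, deco_columns s = (b, h) :: r.
Proof.
by case/lastP: s => [//|s k] _; rewrite deco_columns_rcons; apply: deco_step_cons.
Qed.

Lemma deco_heights_gt0 (s : seq nat) : all (fun c => 0 < c.2)%N (deco_columns s).
Proof.
elim/last_ind: s => [//|s k IHs]; rewrite deco_columns_rcons /deco_step.
case: eqP => [_|/eqP k_neq0]; case: (deco_columns s) IHs => [|[b h] r] //=.
- by case/andP.
- by rewrite andbT lt0n.
- by move=> ->; rewrite lt0n k_neq0.
Qed.

Lemma column_tops_deco_step (b : int) (h : nat) (r : seq (int * nat)) (k : nat) :
  sorted <=%R (column_tops (deco_step ((b, h) :: r) k)) ->
  sorted <=%R (column_tops ((b, h) :: r)) /\ (k != 0 -> k <= h)%N.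
Proof.
rewrite /deco_step /column_tops; case: eqP => [_|_] /=.
  by rewrite (_ : b - 1 + Posz h.+1 = b + Posz h) //; lia.
by move=> /andP [k_le tops_sorted]; split => // _; lia.
Qed.

Lemma valid_steps_rcons (s : seq nat) (k : nat) :
  valid_steps (rcons s k) -> valid_steps s /\ (k <= size s)%N.
Proof.
rewrite /valid_steps size_rcons -addn1 iotaD all_cat /= add0n nth_rcons ltnn eqxx andbT.
move=> /andP [valid_s k_le]; split => //.
apply/allP => i i_in; have := allP valid_s i i_in.
by rewrite mem_iota in i_in; rewrite nth_rcons (andP i_in).2.
Qed.

Lemma first_column_size_deco (s : seq nat) : (0 < size s)%N ->
  first_column_size (deco_cells s) = (head (0%:Z, 0%N) (deco_columns s)).2.
Proof.
move=> /deco_columns_cons [b [h [r cols_eq]]].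
have := deco_heights_gt0 s; rewrite cols_eq /= => /andP [h_gt0 _].
rewrite /first_column_size /deco_cells cols_eq /=.
change (cells_of_columns ((b, h) :: r)) with
  ([seq (Posz 0, b + Posz t) | t <- iota 0 h] ++ cells_from 1 r).
set P := (_ ++ _).
have P_ge0 c : c \in P -> 0 <= c.1.
  by case: c => x y /(mem_cells_from ((b, h) :: r) 0) [j _ [-> _]].
have corner_in : (Posz 0, b) \in P.
  by rewrite mem_cat mem_column eqxx /=; apply/orP; left; apply/andP; split; lia.
rewrite count_cat (@eq_in_count _ _ predT); last first.
  case=> x y; rewrite mem_column => /andP [/eqP -> _].
  by apply/allP => d /P_ge0.
rewrite (@eq_in_count _ _ pred0 (cells_from 1 r)) ?count_pred0.
  by rewrite count_predT size_map size_iota addn0.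
case=> x y /(mem_cells_from r 1) [j _ [-> _]] /=.
by apply/negP => /allP /(_ _ corner_in) /=; lia.
Qed.

Lemma last_run_phi4inv (s : seq nat) :
  valid_steps s -> (0 < size s)%N -> sorted <=%R (column_tops (deco_columns s)) ->
  is_last_run (phi4inv s) (head (0%:Z, 0%N) (deco_columns s)).2.
Proof.
elim/last_ind: s => [//|s k IHs] /valid_steps_rcons [valid_s k_le] _.
rewrite phi4inv_rcons deco_columns_rcons.
case: (posnP (size s)) => [s_nil | s_gt0].
  by move: k_le; rewrite s_nil (size0nil s_nil) leqn0 => /eqP -> _; split.
have [b [h [r cols_eq]]] := deco_columns_cons s_gt0.
rewrite cols_eq => /column_tops_deco_step [tops_sorted k_le_h].
have /= := IHs valid_s s_gt0; rewrite cols_eq => /(_ tops_sorted) /= run_s.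
have w_lt : all (fun x => x < (size (phi4inv s)).+1)%N (phi4inv s).
  by rewrite size_phi4inv; apply: sub_all (phi4inv_bounded s) => x /=; rewrite ltnS.
rewrite /phi4_step /deco_step; case: eqP => [_|/eqP k_neq0] /=.
  exact: is_last_run_rcons.
by apply: (is_last_run_insert run_s w_lt); rewrite lt0n k_neq0 k_le_h.
Qed.

End Columns.

Theorem mainTheorem2 (s : seq nat) :
  (0 < size s)%N -> valid_steps s -> is_parallelogram (deco_cells s) ->
  first_column_size (deco_cells s) = last_run_length (phi4inv s).
Proof.
move=> s_gt0 valid_s parallelogram_s.
have tops_sorted := parallelogram_column_tops_sorted (deco_heights_gt0 s) parallelogram_s.
have run_s := last_run_phi4inv valid_s s_gt0 tops_sorted.
by rewrite first_column_size_deco // (last_run_lengthE run_s).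
Qed.
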